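(* Let $\mathcal M=(S,A,P)$ be an MDP, $T\subseteq S$ a set of sink target states, $s_0\in S$ with $\mathrm{Val}(s_0)>0$, and $\mathcal M'$ the pruned MDP. Let $\sigma^*$ be a strategy of $\mathcal M'$ minimizing $\mathbb E'_{\sigma,s_0}(\mathrm{len}_T)$ over all strategies $\sigma$ of $\mathcal M'$. Then (1) $\Pr_{\sigma^*,s_0}(\Diamond T)=\mathrm{Val}(s_0)$, and (2) $\mathbb E_{\sigma^*,s_0}(\mathrm{len}_T\mid\Diamond T)=\min_{\sigma\in\Sigma_{\mathcal M,s_0}(\Diamond T)}\mathbb E_{\sigma,s_0}(\mathrm{len}_T\mid\Diamond T)$.
   Context: An MDP is $\mathcal M=(S,A,P)$ with $S,A$ finite and $P$ a partial map $S\times A\to\mathrm{Dist}(S)$; $a$ is legal at $s$ if $P(s,a)$ is defined; $P(s,a,s')=P(s,a)(s')$. A strategy maps finite paths to distributions over legal actions at the last state (history-dependent, randomized). $\Pr_{\sigma,s}$, $\mathbb E_{\sigma,s}$ are the induced probability measure and expectation on infinite paths from $s$. States of $T$ are sinks (single legal action, self-loop with probability 1); $\Diamond T$ is the event of visiting $T$; $\mathrm{Val}(s)=\max_\sigma\Pr_{\sigma,s}(\Diamond T)$; $\Sigma_{\mathcal M,s}(\Diamond T)$ is the set of strategies with $\Pr_{\sigma,s}(\Diamond T)=\mathrm{Val}(s)$. $\mathrm{len}_T(\rho)$ is the least $i$ with $\rho[i]\in T$ ($\infty$ if none). $\mathbb E_{\sigma,s}(\mathrm{len}_T\mid\Diamond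 T)=\sum_{r\ge0}r\cdot\Pr_{\sigma,s}(\Diamond T\wedge\mathrm{len}_T=r)/\Pr_{\sigma,s}(\Diamond T)$. $\mathrm{Opt}_{\mathcal M}=\{(s,a): a\text{ legal at }s,\ \mathrm{Val}(s)=\sum_{s'}P(s,a,s')\mathrm{Val}(s')\}$. The pruned MDP $\mathcal M'=(S',A,P')$ has $S'=\{s:\mathrm{Val}(s)>0\}$ and $P'(s,a,s')=P(s,a,s')\mathrm{Val}(s')/\mathrm{Val}(s)$ if $s\in S'$ and $(s,a)\in\mathrm{Opt}_{\mathcal M}$ (undefined otherwise). Strategies of $\mathcal M'$ are identified with strategies of $\mathcal M$ that after every finite path only play actions $a$ with $(\mathrm{last}(\rho),a)\in\mathrm{Opt}_{\mathcal M}$; $\mathbb E'_{\sigma,s}$ is the expectation in $\mathcal M'$. *)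

From HB Require Import structures.
From mathcomp Require Import all_boot all_order all_algebra.
From mathcomp Require Import all_classical all_reals ereal sequences.
Set Implicit Arguments. Unset Strict Implicit. Unset Printing Implicit Defensive.
Import Order.TTheory GRing.Theory Num.Theory.
Local Open Scope ring_scope.
Local Open Scope ereal_scope.

(* An MDP over finite state space S and action space A:
   [legal s a] says P(s,a) is defined; [P s a s'] = P(s,a)(s') (only
   meaningful when [legal s a]). *)
Definition is_MDP (R : realType) (S A : finType)
    (legal : S -> A -> bool) (P : S -> A -> S -> R) : Prop :=
  forall s a, legal s a ->
    (forall s', (0 <= P s a s')%R) /\ (\sum_(s' : S) P s a s')%R = 1%R.

Definition sinks (R : realType) (S A : finType)
    (legal : S -> A -> bool) (P : S -> A -> S -> R) (T : {set S}) : Prop :=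
  forall s, s \in T ->
    exists a, [/\ legal s a, (forall b, legal s b -> b = a) & P s a s = 1%R].

(* A (history-dependent, randomized) strategy: given the finite path
   s_0 a_0 ... s_{n-1} a_{n-1} s_n, encoded as the list of pairs
   [(s_0,a_0);...;(s_{n-1},a_{n-1})] and the last state s_n, it returns
   a distribution over the actions legal at s_n. *)
Definition strategy (R : realType) (S A : finType) :=
  seq (S * A) -> S -> A -> R.

Definition is_strategy (R : realType) (S A : finType)
    (legal : S -> A -> bool) (sigma : strategy R S A) : Prop :=
  forall h s,
    [/\ (forall a, (0 <= sigma h s a)%R),
        (\sum_(a : A) sigma h s a)%R = 1%R &
        (forall a, (0 < sigma h s a)%R -> legal s a)].

(* hit P T sigma h s r = probability, in the path measure induced by
   sigma from the current path (h, s) with transition function P, that the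
   first visit to T happens exactly r steps later.  With h = [::] this is
   Pr_{sigma,s}(Diamond T /\ len_T = r), i.e. the measure of the
   corresponding (finite union of) cylinder sets. *)
Fixpoint hit (R : realType) (S A : finType) (P : S -> A -> S -> R)
    (T : {set S}) (sigma : strategy R S A) (h : seq (S * A)) (s : S)
    (r : nat) : R :=
  match r with
  | 0 => if s \in T then 1%R else 0%R
  | r'.+1 =>
      if s \in T then 0%R
      else (\sum_(a : A) sigma h s a *
              \sum_(s' : S) P s a s' * hit P T sigma (rcons h (s, a)) s' r')%R
  end.

Definition PrReach (R : realType) (S A : finType) (P : S -> A -> S -> R)
    (T : {set S}) (sigma : strategy R S A) (s : S) : \bar R :=
  \sum_(r <oo) (hit P T sigma [::] s r)%:E.

Definition Val (R : realType) (S A : finType) (legal : S -> A -> bool)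
    (P : S -> A -> S -> R) (T : {set S}) (s : S) : \bar R :=
  ereal_sup [set PrReach P T sigma s | sigma in [set sigma | is_strategy legal sigma]].

Definition OptReachStrats (R : realType) (S A : finType) (legal : S -> A -> bool)
    (P : S -> A -> S -> R) (T : {set S}) (s : S) : set (strategy R S A) :=
  [set sigma | is_strategy legal sigma /\ PrReach P T sigma s = Val legal P T s].

Definition Opt (R : realType) (S A : finType) (legal : S -> A -> bool)
    (P : S -> A -> S -> R) (T : {set S}) (s : S) (a : A) : Prop :=
  legal s a /\ Val legal P T s = \sum_(s' : S) (P s a s')%:E * Val legal P T s'.

(* Transition function of the pruned MDP M' (only used at states with
   Val > 0 and optimal actions, which are the only ones reachable/played). *)
Definition Ppruned (R : realType) (S A : finType) (legal : S -> A -> bool)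
    (P : S -> A -> S -> R) (T : {set S}) (s : S) (a : A) (s' : S) : R :=
  (P s a s' * fine (Val legal P T s') / fine (Val legal P T s))%R.

(* Strategies of M', identified with strategies of M that after every
   finite path only play actions in Opt_M. *)
Definition is_pruned_strategy (R : realType) (S A : finType)
    (legal : S -> A -> bool) (P : S -> A -> S -> R) (T : {set S})
    (sigma : strategy R S A) : Prop :=
  is_strategy legal sigma /\
  forall h s a, (0 < sigma h s a)%R -> Opt legal P T s a.

(* E'_{sigma,s}(len_T) : expectation of the [0,oo]-valued len_T in M',
   i.e. sum_r r Pr'(len_T = r) + oo * Pr'(len_T = oo) (with 0 * oo = 0). *)
Definition ExpLenPruned (R : realType) (S A : finType) (legal : S -> A -> bool)
    (P : S -> A -> S -> R) (T : {set S}) (sigma : strategy R S A) (s : S)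
    : \bar R :=
  let P' := Ppruned legal P T in
  \sum_(r <oo) (r%:R * hit P' T sigma [::] s r)%:E
  + +oo * (1 - PrReach P' T sigma s).

Definition CondExpLen (R : realType) (S A : finType) (P : S -> A -> S -> R)
    (T : {set S}) (sigma : strategy R S A) (s : S) : \bar R :=
  \sum_(r <oo) ((r%:R * hit P T sigma [::] s r)%:E / PrReach P T sigma s).

From HB Require Import structures.
From mathcomp Require Import all_boot all_order all_algebra.
From mathcomp Require Import all_classical all_reals ereal sequences.
From mathcomp Require Import normedtype.
From mathcomp.algebra_tactics Require Import ring lra.
Import Order.TTheory GRing.Theory Num.Theory.
Set Implicit Arguments. Unset Strict Implicit. Unset Printing Implicit Defensive.
Local Open Scope ring_scope.

(* Let v be Val, a real number in [0, 1] as soon as some strategy exists.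
   The proof rests on three facts.
   - v is the least excessive function (nonnegative, at least 1 on T and
     superharmonic): every excessive function bounds reachability
     probabilities, and v is itself excessive by the Bellman inequality.
   - Hitting probabilities in the pruned MDP M' are those of M divided by
     the value of the start state ([hit_pruned]); hence for strategies
     attaining Val(s0) the expected length in M' is the conditional expected
     length in M ([ExpLenPruned_CondExpLen]).
   - Optimal actions lead positive-value states towards T: ranking states by
     an attractor of optimal actions ([attractor_exhaustive], proved by
     denting v on a trap, [value_trap]), a rank-descending memoryless
     strategy of M' admits a potential function bounding its expected
     length ([pruned_finite_len]).
   Part (1) follows since a minimizer has finite expected length in M', so
   it reaches T almost surely in M' ([finite_len_reaches]).  Part (2)
   follows since a strategy attaining Val(s0) plays only optimal actions on
   positive-probability paths ([optimal_play]); redirecting it elsewhere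
   gives a strategy of M' with the same hitting distribution
   ([redirect_hit]), against which the minimizer compares. *)

Section NonnegSeries.
Variable R : realType.
Local Open Scope ereal_scope.

Lemma nnseries_le (u : nat -> R) (b : R) : (forall r, (0 <= u r)%R) ->
  (forall n, (\sum_(0 <= r < n) u r <= b)%R) -> \sum_(r <oo) (u r)%:E <= b%:E.
Proof.
move=> u0 ub; apply: lime_le.
  by apply: is_cvg_nneseries => n _ _; rewrite lee_fin.
by apply: nearW => n; rewrite sumEFin lee_fin.
Qed.

Lemma nnseries_ge_partial (u : nat -> R) n : (forall r, (0 <= u r)%R) ->
  (\sum_(0 <= r < n) u r)%:E <= \sum_(r <oo) (u r)%:E.
Proof.
move=> u0; rewrite -sumEFin; apply: nneseries_lim_ge => k _ _.
by rewrite lee_fin.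
Qed.

Lemma nnseries_ge0 (u : nat -> R) : (forall r, (0 <= u r)%R) ->
  0 <= \sum_(r <oo) (u r)%:E.
Proof. by move=> u0; apply: nneseries_ge0 => n _ _; rewrite lee_fin. Qed.

Lemma nnseries_recl (u : nat -> R) : (forall r, (0 <= u r)%R) ->
  \sum_(r <oo) (u r)%:E = (u 0%N)%:E + \sum_(r <oo) (u r.+1)%:E.
Proof.
move=> u0; rewrite nneseries_recl //; last by move=> k _; rewrite lee_fin.
congr (_ + _); rewrite -(@nneseries_addn _ (fun r => (u r)%:E) 1); last first.
  by move=> i; rewrite lee_fin.
by apply: eq_eseriesr => i _; rewrite addn1.
Qed.

End NonnegSeries.

Lemma prod_le_factor (R : realDomainType) (I : finType) (Q : pred I)
    (F : I -> R) i0 :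
  (forall i, Q i -> 0 <= F i <= 1) -> Q i0 -> \prod_(i | Q i) F i <= F i0.
Proof.
move=> F01 Qi0; rewrite (bigD1 i0) //=; apply: ler_piMr.
  by have /andP[] := F01 _ Qi0.
by apply: prodr_ile1 => i /andP[/F01].
Qed.

Section MDP.
Variables (R : realType) (S A : finType) (legal : S -> A -> bool)
  (P : S -> A -> S -> R) (T : {set S}).
Hypothesis HM : is_MDP legal P.

Lemma P_ge0 s a s' : legal s a -> 0 <= P s a s'.
Proof. by move=> la; have [->] := HM la. Qed.

Lemma P_sum1 s a : legal s a -> \sum_s' P s a s' = 1.
Proof. by move=> la; have [_ ->] := HM la. Qed.

Lemma step_ge0 sigma h s b s' : is_strategy legal sigma ->
  0 <= sigma h s b * P s b s'.
Proof.
move=> Hs; have [H0 _ Hl] := Hs h s.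
have := H0 b; rewrite le_eqVlt => /orP[/eqP <-|sb]; first by rewrite mul0r.
by apply: mulr_ge0; [exact: ltW|exact: P_ge0 (Hl _ sb)].
Qed.

Lemma hitS sigma h s r : s \notin T -> hit P T sigma h s r.+1 =
  \sum_b \sum_s' sigma h s b * P s b s' * hit P T sigma (rcons h (s, b)) s' r.
Proof.
move=> sT /=; rewrite (negbTE sT); apply: eq_bigr => b _.
by rewrite big_distrr; apply: eq_bigr => s' _ /=; rewrite mulrA.
Qed.

Lemma hit0_notin sigma h s : s \notin T -> hit P T sigma h s 0 = 0.
Proof. by move=> sT /=; rewrite (negbTE sT). Qed.

Lemma hit_ge0 sigma : is_strategy legal sigma -> forall r h s,
  0 <= hit P T sigma h s r.
Proof.
move=> Hs; elim=> [|r IH] h s; first by rewrite /=; case: ifP.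
have [sT|sT] := boolP (s \in T); first by rewrite /= sT.
rewrite hitS //; apply: sumr_ge0 => b _; apply: sumr_ge0 => s' _.
by apply: mulr_ge0; [exact: step_ge0|exact: IH].
Qed.

Definition excessive (g : S -> R) : Prop :=
  [/\ forall s, 0 <= g s, forall t, t \in T -> 1 <= g t &
      forall s a, s \notin T -> legal s a -> \sum_s' P s a s' * g s' <= g s].

Lemma partial_reach_le sigma g : is_strategy legal sigma -> excessive g ->
  forall n h s, \sum_(0 <= r < n) hit P T sigma h s r <= g s.
Proof.
move=> Hs [g0 gT gsup]; elim=> [|n IH] h s; first by rewrite big_geq.
rewrite big_nat_recl //=; case: ifP => sT.
  by rewrite big1 ?addr0 ?gT // => r _ /=; rewrite sT.
rewrite add0r exchange_big /=.
have [H0 H1 Hl] := Hs h s.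
apply: (@le_trans _ _ (\sum_(a : A) sigma h s a * g s)); last first.
  by rewrite -big_distrl /= H1 mul1r.
apply: ler_sum => a _; rewrite -big_distrr /=.
have := H0 a; rewrite le_eqVlt => /orP[/eqP <-|sa]; first by rewrite !mul0r.
apply: ler_wpM2l => //; apply: le_trans (gsup _ _ (negbT sT) (Hl _ sa)).
rewrite exchange_big /=; apply: ler_sum => s' _; rewrite -big_distrr /=.
by apply: ler_wpM2l; [exact: P_ge0 (Hl _ sa)|exact: IH].
Qed.

Lemma PrReach_le_excessive sigma g s : is_strategy legal sigma -> excessive g ->
  (PrReach P T sigma s <= (g s)%:E)%E.
Proof.
move=> Hs Hg; apply: nnseries_le => [r|n]; first exact: hit_ge0.
exact: partial_reach_le.
Qed.

Lemma excessive1 : excessive (fun=> 1).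
Proof.
split=> // s a _ la.
by under eq_bigr do rewrite mulr1; rewrite P_sum1.
Qed.

Lemma PrReach_ge0 sigma s : is_strategy legal sigma -> (0 <= PrReach P T sigma s)%E.
Proof. by move=> Hs; apply: nnseries_ge0 => r; exact: hit_ge0. Qed.

Lemma PrReach_le1 sigma s : is_strategy legal sigma -> (PrReach P T sigma s <= 1)%E.
Proof. by move=> Hs; apply: (PrReach_le_excessive s Hs excessive1). Qed.

Lemma PrReach_T sigma t : is_strategy legal sigma -> t \in T ->
  PrReach P T sigma t = 1%E.
Proof.
move=> Hs tT; apply/le_anti; rewrite PrReach_le1 //=.
have := nnseries_ge_partial 1 (fun r => hit_ge0 Hs r [::] t).
by rewrite big_nat1 /= tT.
Qed.


(* From now on the MDP admits at least one strategy, so Val is a real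
   number in [0, 1]; [v] is that real number. *)
Hypothesis Hex : exists sigma : strategy R S A, is_strategy legal sigma.

Definition v (s : S) : R := fine (Val legal P T s).

Lemma Val_ge sigma s : is_strategy legal sigma ->
  (PrReach P T sigma s <= Val legal P T s)%E.
Proof. by move=> Hs; apply: ereal_sup_ubound; exists sigma. Qed.

Lemma Val_le_excessive g s : excessive g -> (Val legal P T s <= (g s)%:E)%E.
Proof.
by move=> Hg; apply: ge_ereal_sup => _ [sigma Hs <-]; exact: PrReach_le_excessive.
Qed.

Lemma ValE s : Val legal P T s = (v s)%:E.
Proof.
have [sigma Hs] := Hex.
have V0 := le_trans (PrReach_ge0 s Hs) (Val_ge s Hs).
have V1 := Val_le_excessive s excessive1.
by rewrite /v fineK // ge0_fin_numE // (le_lt_trans V1 (ltry _)).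
Qed.

Lemma v_ge0 s : 0 <= v s.
Proof.
have [sigma Hs] := Hex.
by rewrite -lee_fin -ValE; apply: le_trans (PrReach_ge0 s Hs) (Val_ge s Hs).
Qed.

Lemma v_le1 s : v s <= 1.
Proof. by rewrite -lee_fin -ValE; exact: Val_le_excessive excessive1. Qed.

Lemma v_T t : t \in T -> v t = 1.
Proof.
move=> tT; apply/le_anti; rewrite v_le1 /=; have [sigma Hs] := Hex.
by have := Val_ge t Hs; rewrite PrReach_T // ValE lee_fin.
Qed.

(* The strategy that plays action [a] at the initial state [s] and then,
   having moved to [u], follows [tau u] as if the play started in [u]. *)
Definition first_then (s : S) (a : A) (tau : S -> strategy R S A) : strategy R S A :=
  fun h t => match h with
   | [::] => if t == s then (fun b => ((b == a)%:R : R)) else tau t [::] t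
   | _ :: h' => tau (if h' is x :: _ then x.1 else t) h' t end.

Lemma first_then_strategy s a tau : legal s a ->
  (forall u, is_strategy legal (tau u)) -> is_strategy legal (first_then s a tau).
Proof.
move=> la Ht h t; case: h => [|x h'] /=; last exact: Ht.
case: eqP => [->|_]; last exact: Ht.
split => [b||b]; first by rewrite ler0n.
  by rewrite (bigD1 a) //= eqxx big1 ?addr0 // => b /negbTE ->.
by case: eqP => [->|] //; rewrite ltxx.
Qed.

Lemma first_then_hit s a tau r : s \notin T ->
  hit P T (first_then s a tau) [::] s r.+1 =
  \sum_s' P s a s' * hit P T (tau s') [::] s' r.
Proof.
have shift r' h' t : hit P T (first_then s a tau) ((s, a) :: h') t r' =
    hit P T (tau (if h' is x :: _ then x.1 else t)) h' t r'.
  elim: r' h' t => [|r' IH] h' t //=; case: ifP => // _.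
  apply: eq_bigr => b _; congr (_ * _); apply: eq_bigr => t' _.
  by rewrite IH; case: h'.
move=> sT /=; rewrite (negbTE sT) eqxx (bigD1 a) //= eqxx mul1r.
rewrite [X in _ + X]big1 ?addr0; last by move=> b /negbTE ->; rewrite mul0r.
by apply: eq_bigr => s' _; rewrite shift.
Qed.

(* Bellman inequality: playing [a] first and then near-optimally shows
   that the value is superharmonic. *)
Lemma bellman s a : s \notin T -> legal s a -> \sum_s' P s a s' * v s' <= v s.
Proof.
move=> sT la; apply/ler_addgt0Pr => e e0.
have /choice [tau Htau] : forall u, exists tau : strategy R S A,
    is_strategy legal tau /\ ((v u - e)%:E < PrReach P T tau u)%E.
  move=> u; have : ((v u - e)%:E < Val legal P T u)%E.
    by rewrite ValE lte_fin ltrBlDr ltrDl.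
  by move/ereal_sup_gt => [_ [tau Ht <-] lt]; exists tau.
have Hfirst := first_then_strategy la (fun u => (Htau u).1).
have hge0 u r : 0 <= P s a u * hit P T (tau u) [::] u r.
  by apply: mulr_ge0; [exact: P_ge0|exact: hit_ge0 (Htau u).1 _ _ _].
have Hreach : (PrReach P T (first_then s a tau) s =
    \sum_u (P s a u)%:E * PrReach P T (tau u) u)%E.
  rewrite /PrReach nnseries_recl; last by move=> r; exact: hit_ge0.
  rewrite hit0_notin // add0e; under eq_eseriesr do rewrite first_then_hit // -sumEFin.
  rewrite nneseries_sum; last by move=> u r _; rewrite lee_fin.
  apply: eq_bigr => u _; rewrite -nneseriesZl; last first.
    by move=> r _; rewrite lee_fin; exact: hit_ge0 (Htau u).1 _ _ _.
  by apply: eq_eseriesr => r _; rewrite EFinM.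
have := Val_ge s Hfirst; rewrite ValE Hreach => H.
have -> : \sum_s' P s a s' * v s' = \sum_s' P s a s' * (v s' - e) + e.
  under [in RHS]eq_bigr do rewrite mulrBr.
  by rewrite sumrB -big_distrl /= P_sum1 // mul1r subrK.
rewrite lerD2r -lee_fin; apply: le_trans H.
rewrite -sumEFin; apply: lee_sum => u _; rewrite EFinM.
by apply: lee_wpmul2l; [rewrite lee_fin P_ge0|exact: ltW (Htau u).2].
Qed.

Lemma v_excessive : excessive v.
Proof. by split; [exact: v_ge0|move=> t /v_T ->|exact: bellman]. Qed.

Lemma hit_le_v sigma : is_strategy legal sigma ->
  forall r h s, hit P T sigma h s r <= v s.
Proof.
move=> Hs r h s; apply: le_trans (partial_reach_le Hs v_excessive r.+1 h s).
rewrite big_nat_recr //= lerDr; apply: sumr_ge0 => i _; exact: hit_ge0.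
Qed.

Lemma hit_v0 sigma : is_strategy legal sigma ->
  forall r h s, v s = 0 -> hit P T sigma h s r = 0.
Proof.
by move=> Hs r h s v0; apply/le_anti; rewrite hit_ge0 // andbT -v0 hit_le_v.
Qed.

Lemma OptE s a : Opt legal P T s a <->
  legal s a /\ v s = \sum_s' P s a s' * v s'.
Proof.
rewrite /Opt ValE.
have -> : (\sum_s' (P s a s')%:E * Val legal P T s' =
   (\sum_s' P s a s' * v s')%:E)%E.
  by rewrite -sumEFin; apply: eq_bigr => s' _; rewrite ValE EFinM.
by split=> -[la H]; split=> //; [case: H | rewrite H].
Qed.

Lemma hit_pruned sigma : is_strategy legal sigma ->
  forall r h s, v s * hit (Ppruned legal P T) T sigma h s r = hit P T sigma h s r.
Proof.
move=> Hs; elim=> [|r IH] h s.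
  by rewrite /=; case: ifP => sT; [rewrite v_T // mulr1|rewrite mulr0].
have [v0|vn0] := eqVneq (v s) 0; first by rewrite v0 mul0r (hit_v0 Hs _ _ v0).
rewrite /=; case: ifP => sT; first by rewrite mulr0.
rewrite big_distrr; apply: eq_bigr => a _ /=; rewrite mulrCA; congr (_ * _).
rewrite big_distrr; apply: eq_bigr => s' _ /=; rewrite -IH.
have -> : Ppruned legal P T s a s' = P s a s' * v s' / v s by [].
by field.
Qed.


Lemma legal_exists s : exists a, legal s a.
Proof.
have [sigma Hs] := Hex; have [H0 H1 Hl] := Hs [::] s.
have [a Ha] : exists a, 0 < sigma [::] s a.
  apply: contrapT => Hn; move: H1; rewrite big1 => [/eqP|a _].
    by rewrite eq_sym oner_eq0.
  by apply/eqP; rewrite eq_le H0 andbT leNgt; apply/negP => Ha; apply: Hn; exists a.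
by exists a; exact: Hl.
Qed.

Lemma opt_gap : exists2 eta, 0 < eta <= 1 &
  forall s a, s \notin T -> legal s a -> ~ Opt legal P T s a ->
    eta <= v s - \sum_s' P s a s' * v s'.
Proof.
pose gap (x : S * A) := v x.1 - \sum_y P x.1 x.2 y * v y.
pose Q := [pred x : S * A | [&& x.1 \notin T, legal x.1 x.2 &
                                ~~ `[< Opt legal P T x.1 x.2 >]]].
have gap01 x : Q x -> 0 < gap x <= 1.
  case: x => s a /and3P[sT la /asboolPn nO] /=.
  rewrite subr_gt0 lt_neqAle bellman // andbT; apply/andP; split.
    by apply/negP => /eqP E; apply: nO; apply/OptE.
  rewrite lerBlDr; apply: le_trans (v_le1 _) _; rewrite lerDl.
  by apply: sumr_ge0 => y _; apply: mulr_ge0; [exact: P_ge0|exact: v_ge0].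
exists (\prod_(x | Q x) gap x).
  apply/andP; split; first by apply: prodr_gt0 => x /gap01 /andP[].
  by apply: prodr_ile1 => x /gap01 /andP[/ltW -> ->].
move=> s a sT la nO; apply: (@prod_le_factor _ _ Q gap (s, a)).
  by move=> x /gap01 /andP[/ltW -> ->].
by rewrite /Q /= sT la; apply/asboolPn.
Qed.

Lemma excessive_dent (U : {set S}) eta : 0 <= eta ->
  (forall x, x \in U -> x \notin T /\ eta <= v x) ->
  (forall x a y, x \in U -> Opt legal P T x a -> 0 < P x a y -> y \in U) ->
  (forall x a, x \in U -> legal x a -> ~ Opt legal P T x a ->
     eta <= v x - \sum_y P x a y * v y) ->
  excessive (fun y => v y - eta * (y \in U)%:R).
Proof.
move=> eta0 HU Uclosed Ugap; split.
- move=> y; case: (boolP (y \in U)) => yU; last by rewrite mulr0 subr0 v_ge0.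
  by rewrite mulr1 subr_ge0; have [] := HU _ yU.
- move=> t tT; have -> : (t \in U) = false.
    by apply/negbTE/negP => /HU []; rewrite tT.
  by rewrite mulr0 subr0 v_T.
move=> s a sT la.
have -> : \sum_y P s a y * (v y - eta * (y \in U)%:R) =
    \sum_y P s a y * v y - eta * \sum_y P s a y * (y \in U)%:R.
  by rewrite big_distrr -sumrB; apply: eq_bigr => y _ /=; ring.
have mass_ge0 : 0 <= eta * \sum_y P s a y * (y \in U)%:R.
  by apply: mulr_ge0 => //; apply: sumr_ge0 => y _; rewrite mulr_ge0 ?P_ge0.
have bell := bellman sT la.
case: (boolP (s \in U)) => sU; last by rewrite mulr0 subr0; lra.
rewrite mulr1; case: (pselect (Opt legal P T s a)) => Oa; last first.
  by have := Ugap _ _ sU la Oa; lra.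
have [_ vE] := (OptE s a).1 Oa.
have -> : \sum_y P s a y * (y \in U)%:R = 1.
  rewrite -[RHS](P_sum1 la); apply: eq_bigr => y _.
  have [->|Py] := eqVneq (P s a y) 0; first by rewrite mul0r.
  have Pyp : 0 < P s a y by rewrite lt_neqAle eq_sym Py P_ge0.
  by rewrite (Uclosed _ _ _ sU Oa Pyp) mulr1.
by rewrite -vE mulr1.
Qed.

Lemma opt_support_level (c : R) x a : v x = c -> Opt legal P T x a ->
  (forall y, 0 < P x a y -> v y <= c) -> forall y, 0 < P x a y -> v y = c.
Proof.
move=> vxc Oa Hle y Py; have [la vE] := (OptE x a).1 Oa.
have Hterm z : 0 <= P x a z * (c - v z).
  have [->|Pz] := eqVneq (P x a z) 0; first by rewrite mul0r.
  by rewrite mulr_ge0 ?P_ge0 // subr_ge0 Hle // lt_neqAle eq_sym Pz P_ge0.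
have H0 : \sum_z P x a z * (c - v z) = 0.
  under eq_bigr do rewrite mulrBr.
  by rewrite sumrB -big_distrl /= P_sum1 // mul1r -vE vxc subrr.
have /eqP := psumr_eq0P (fun z _ => Hterm z) H0 (i := y) isT.
by rewrite mulf_eq0 gt_eqF //= subr_eq0 => /eqP.
Qed.

(* If optimal actions from a set W of non-target states lead only back
   into W or to value-0 states, then W has value 0: otherwise denting v on
   the top value level of W yields an excessive function below v. *)
Lemma value_trap (W : {set S}) :
  (forall x, x \in W -> x \notin T) ->
  (forall x a y, x \in W -> Opt legal P T x a -> 0 < P x a y ->
     (y \in W) || (v y == 0)) ->
  forall x, x \in W -> v x = 0.
Proof.
move=> WT Wclosed x xW; apply: contrapT => vx0.
case: (arg_maxP v xW) => m mW mmax; set c := v m.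
have c0 : 0 < c.
  by apply: lt_le_trans (mmax _ xW); rewrite lt_neqAle v_ge0 andbT eq_sym; apply/eqP.
pose U := [set y in W | v y == c].
have HU y : y \in U -> y \notin T /\ c <= v y.
  by rewrite inE => /andP[/WT yT /eqP ->].
have Uclosed y a z : y \in U -> Opt legal P T y a -> 0 < P y a z -> z \in U.
  rewrite inE => /andP[yW /eqP vyc] Oa Pz.
  have Hle u : 0 < P y a u -> v u <= c.
    by move=> Pu; case/orP: (Wclosed _ _ _ yW Oa Pu) => [/mmax|/eqP ->] //; exact: ltW.
  have vzc := opt_support_level vyc Oa Hle Pz.
  case/orP: (Wclosed _ _ _ yW Oa Pz) => [zW|/eqP vz0].
    by rewrite inE zW vzc eqxx.
  by move: c0; rewrite -vzc vz0 ltxx.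
have [eta /andP[eta0 eta1] Hgap] := opt_gap.
have ceta_c : c * eta <= c by rewrite ler_piMr // ltW.
have Hdent : excessive (fun y => v y - c * eta * (y \in U)%:R).
  apply: excessive_dent => [|y /HU [yT cy]|//|y a yU la nO].
  - by rewrite mulr_ge0 // ltW.
  - by split=> //; exact: le_trans ceta_c cy.
  apply: le_trans (Hgap _ _ (HU _ yU).1 la nO).
  by rewrite ler_piMl ?(ltW eta0) //; exact: v_le1.
have mU : m \in U by rewrite inE eqxx andbT.
have ceta0 : 0 < c * eta by rewrite mulr_gt0.
have := Val_le_excessive m Hdent; rewrite ValE lee_fin mU mulr1 -/c; lra.
Qed.


Fixpoint attractor (k : nat) : {set S} :=
  if k is k'.+1 then attractor k' :|: [set s | (0 < v s) &&
     `[< exists a, Opt legal P T s a /\ exists2 s', s' \in attractor k' & 0 < P s a s' >]]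
  else T.

Lemma attractor_pos k s : s \in attractor k -> 0 < v s.
Proof.
elim: k s => [|k IH] s /=; first by move=> /v_T ->.
by rewrite finset.in_setU inE => /orP[/IH //|/andP[]].
Qed.

(* Every positive-value state lies in some attractor: the unranked
   positive-value states form a trap in the sense of [value_trap]. *)
Lemma attractor_exhaustive s : 0 < v s -> exists k, s \in attractor k.
Proof.
move=> vs; apply: contrapT => Hn.
pose W := [set s | (0 < v s) && `[< forall k, s \notin attractor k >]].
have WT x : x \in W -> x \notin T.
  by rewrite inE => /andP[_ /asboolP /(_ 0%N)].
have Wclosed x a y : x \in W -> Opt legal P T x a -> 0 < P x a y ->
    (y \in W) || (v y == 0).
  move=> xW Oa Py; have [vy0|vy0] := eqVneq (v y) 0; first by rewrite orbT.
  rewrite orbF inE lt_neqAle eq_sym vy0 v_ge0 /=; apply/asboolP => k.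
  apply/negP => yk; move: xW; rewrite inE => /andP[vx /asboolP /(_ k.+1)].
  rewrite /= finset.in_setU negb_or inE vx /= => /andP[_ /negP]; apply.
  by apply/asboolP; exists a; split => //; exists y.
have sW : s \in W.
  by rewrite inE vs; apply/asboolP => k; apply/negP => sk; apply: Hn; exists k.
by move: vs; rewrite (value_trap WT Wclosed sW) ltxx.
Qed.

Definition rank (s : S) : nat :=
  if pselect (exists k, s \in attractor k) is left H then ex_minn H else 0%N.

Lemma rankP s : 0 < v s ->
  s \in attractor (rank s) /\ forall k, s \in attractor k -> (rank s <= k)%N.
Proof.
move=> vs; rewrite /rank; case: pselect => [H|H]; last first.
  by case: H; exact: attractor_exhaustive.
by case: (ex_minnP H).
Qed.

Lemma rank_descent s : 0 < v s -> s \notin T -> exists a, Opt legal P T s a /\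
  exists d, [/\ 0 < P s a d, 0 < v d & (rank d < rank s)%N].
Proof.
move=> vs sT; have [Hin Hmin] := rankP vs.
move: Hin Hmin; case: (rank s) => [|k] Hin Hmin; first by rewrite Hin in sT.
move: Hin; rewrite /= finset.in_setU => /orP[/Hmin|]; first by rewrite ltnn.
rewrite inE => /andP[_ /asboolP [a [Oa [d dk Pd]]]].
have vd := attractor_pos dk.
by exists a; split=> //; exists d; split=> //; have [_ /(_ _ dk)] := rankP vd.
Qed.

(* When the target states are sinks, every state has an optimal action. *)
Hypothesis HT : sinks legal P T.

(* Every state has an optimal action: the sink action on T, a
   rank-descending action at positive-value states, and any legal action
   at value-0 states. *)
Lemma opt_exists s : exists a, Opt legal P T s a.
Proof.
have [sT|sT] := boolP (s \in T).
  have [a [la _ Pss]] := HT sT; exists a; apply/OptE; split=> //.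
  rewrite v_T //; apply/le_anti/andP; split.
    rewrite (bigD1 s) //= Pss v_T // mul1r lerDl.
    by apply: sumr_ge0 => y _; rewrite mulr_ge0 ?P_ge0 ?v_ge0.
  rewrite -[X in _ <= X](P_sum1 la); apply: ler_sum => y _.
  by rewrite ler_piMr ?P_ge0 ?v_le1.
have [vs|vs] := boolP (0 < v s); first by have [a []] := rank_descent vs sT; exists a.
have v0 : v s = 0 by apply/le_anti; rewrite v_ge0 andbT leNgt.
have [a la] := legal_exists s; exists a; apply/OptE; split=> //.
apply/le_anti; rewrite bellman // andbT v0.
by apply: sumr_ge0 => y _; rewrite mulr_ge0 ?P_ge0 ?v_ge0.
Qed.

Lemma descent_choice : exists f : S -> A, exists next : S -> S, forall s,
  Opt legal P T s (f s) /\ (0 < v s -> s \notin T ->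
   [/\ 0 < P s (f s) (next s), 0 < v (next s) & (rank (next s) < rank s)%N]).
Proof.
have /choice [F HF] : forall s, exists p : A * S, Opt legal P T s p.1 /\
    (0 < v s -> s \notin T ->
     [/\ 0 < P s p.1 p.2, 0 < v p.2 & (rank p.2 < rank s)%N]).
  move=> s; have [/andP[vs sT]|nvT] := boolP ((0 < v s) && (s \notin T)).
    by have [a [Oa [d Hd]]] := rank_descent vs sT; exists (a, d).
  have [a Oa] := opt_exists s.
  by exists (a, s); split=> // vs sT; move: nvT; rewrite vs sT.
by exists (fun s => (F s).1), (fun s => (F s).2).
Qed.


Definition memoryless (f : S -> A) : strategy R S A :=
  fun _ s b => ((b == f s)%:R : R).

Lemma memoryless_strategy f : (forall s, legal s (f s)) ->
  is_strategy legal (memoryless f).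
Proof.
move=> lf h s; split => [b||b]; first by rewrite /memoryless ler0n.
  by rewrite /memoryless (bigD1 (f s)) //= eqxx big1 ?addr0 // => b /negbTE ->.
by rewrite /memoryless; case: eqP => [->|] //; rewrite ltxx.
Qed.

Lemma memoryless_hitS f s h r : s \notin T -> hit P T (memoryless f) h s r.+1 =
  \sum_y P s (f s) y * hit P T (memoryless f) (rcons h (s, f s)) y r.
Proof.
move=> sT /=; rewrite (negbTE sT) (bigD1 (f s)) //= /memoryless eqxx mul1r.
by rewrite [X in _ + X]big1 ?addr0 // => b /negbTE ->; rewrite mul0r.
Qed.

(* The analysis of a rank-descending memoryless strategy: a potential
   function decreasing by at least 1 per step in expectation bounds the
   expected length, and forces reaching T with the optimal probability. *)
Section Descent.
Variables (f : S -> A) (next : S -> S).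
Hypothesis Hfd : forall s, Opt legal P T s (f s) /\ (0 < v s -> s \notin T ->
   [/\ 0 < P s (f s) (next s), 0 < v (next s) & (rank (next s) < rank s)%N]).

Let opt_f s : Opt legal P T s (f s). Proof. exact: (Hfd s).1. Qed.
Let legal_f s : legal s (f s). Proof. by have [/OptE []] := Hfd s. Qed.
Let strat_f : is_strategy legal (memoryless f) := memoryless_strategy legal_f.

Lemma memoryless_pruned : is_pruned_strategy legal P T (memoryless f).
Proof.
split=> [|h s a]; first exact: strat_f.
rewrite /memoryless; case: eqP => [-> _ //|].
by rewrite ltxx.
Qed.

Definition pmin : R := \prod_(s | (0 < v s) && (s \notin T)) P s (f s) (next s).

Lemma pmin_gt0 : 0 < pmin.
Proof. by apply: prodr_gt0 => s /andP[vs sT]; have [_ /(_ vs sT) []] := Hfd s. Qed.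

Lemma pmin_le s : 0 < v s -> s \notin T -> pmin <= P s (f s) (next s).
Proof.
move=> vs sT; apply: prod_le_factor; last by rewrite vs sT.
move=> x /andP[vx xT]; have [_ /(_ vx xT) [Px _ _]] := Hfd x.
rewrite (ltW Px) -(P_sum1 (legal_f x)) (bigD1 (next x)) //= lerDl.
by apply: sumr_ge0 => y _; exact: P_ge0.
Qed.

Definition max_rank : nat := (\max_(s : S) rank s)%N.

(* The potential of rank k: solves L (k+1) = 1 + pmin L k + (1 - pmin) L max_rank. *)
Definition level (k : nat) : R := (\sum_(i < k) pmin ^+ i) / pmin ^+ max_rank.

Lemma level_ge0 k : 0 <= level k.
Proof.
apply: divr_ge0; last by apply: exprn_ge0; exact: ltW pmin_gt0.
by apply: sumr_ge0 => i _; apply: exprn_ge0; exact: ltW pmin_gt0.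
Qed.

Lemma level_mono k k' : (k <= k')%N -> level k <= level k'.
Proof.
move=> kk; rewrite /level ler_pM2r; last by rewrite invr_gt0 exprn_gt0 // pmin_gt0.
rewrite -(subnKC kk) big_split_ord /= lerDl.
by apply: sumr_ge0 => i _; apply: exprn_ge0; exact: ltW pmin_gt0.
Qed.

Lemma levelS k : level k.+1 = 1 + pmin * level k + (1 - pmin) * level max_rank.
Proof.
have pK : pmin ^+ max_rank != 0 by rewrite expf_neq0 // gt_eqF // pmin_gt0.
have geom : (1 - pmin) * \sum_(i < max_rank) pmin ^+ i = 1 - pmin ^+ max_rank.
  by rewrite -opprB -(opprB (pmin ^+ max_rank)) subrX1 mulNr.
rewrite /level big_ord_recl expr0.
have -> : \sum_(i < k) pmin ^+ bump 0 i = pmin * \sum_(i < k) pmin ^+ i.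
  by rewrite big_distrr; apply: eq_bigr => i _; rewrite exprS.
rewrite [X in _ = _ + X]mulrA geom.
move: (\sum_(i < k) pmin ^+ i) pK => x; move: (pmin ^+ max_rank) => z zn0.
by field.
Qed.

Definition potential (s : S) : R := if 0 < v s then level (rank s) else 0.

Lemma potential_ge0 s : 0 <= potential s.
Proof. by rewrite /potential; case: ifP => _ //; exact: level_ge0. Qed.

Lemma potential_le s : potential s <= level max_rank.
Proof.
rewrite /potential; case: ifP => _; last exact: level_ge0.
by apply: level_mono; exact: leq_bigmax.
Qed.

Lemma drift s : 0 < v s -> s \notin T ->
  1 + \sum_y P s (f s) y * potential y <= potential s.
Proof.
move=> vs sT; have [_ /(_ vs sT) [Pd vd rkd]] := Hfd s.
rewrite /potential vs; move: rkd; case Ek : (rank s) => [//|k] rkd.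
set q := P s (f s) (next s).
have Hsum : \sum_y P s (f s) y * potential y <= q * level k + (1 - q) * level max_rank.
  rewrite (bigD1 (next s)) //= -/q.
  have -> : 1 - q = \sum_(y | y != next s) P s (f s) y.
    by rewrite -(P_sum1 (legal_f s)) (bigD1 (next s)) //= -/q addrC addrK.
  rewrite big_distrl /=; apply: lerD.
    by apply: ler_wpM2l; [exact: ltW|rewrite /potential vd; exact: level_mono].
  by apply: ler_sum => y _; apply: ler_wpM2l; [exact: P_ge0|exact: potential_le].
have pq : pmin <= q by exact: pmin_le.
have LkK : level k <= level max_rank.
  by apply/level_mono/ltnW; rewrite -Ek; exact: (leq_bigmax (F := rank) s).
rewrite levelS -addrA lerD2l; apply: le_trans Hsum _.
have E : pmin * level k + (1 - pmin) * level max_rank -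
   (q * level k + (1 - q) * level max_rank) =
   (q - pmin) * (level max_rank - level k) by ring.
by rewrite -subr_ge0 E; apply: mulr_ge0; rewrite subr_ge0.
Qed.

Definition reach_within (h : seq (S * A)) (s : S) (n : nat) : R :=
  \sum_(0 <= r < n) hit P T (memoryless f) h s r.
Definition len_within (h : seq (S * A)) (s : S) (n : nat) : R :=
  \sum_(0 <= r < n) r%:R * hit P T (memoryless f) h s r.

Lemma len_within_ge0 h s n : 0 <= len_within h s n.
Proof. by apply: sumr_ge0 => r _; rewrite mulr_ge0 ?hit_ge0. Qed.

Lemma reach_withinS h s n : s \notin T -> reach_within h s n.+1 =
  \sum_y P s (f s) y * reach_within (rcons h (s, f s)) y n.
Proof.
move=> sT; rewrite /reach_within big_nat_recl // hit0_notin // add0r.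
under eq_bigr do rewrite memoryless_hitS //.
by rewrite exchange_big /=; apply: eq_bigr => y _; rewrite big_distrr.
Qed.

Lemma len_withinS h s n : s \notin T -> len_within h s n.+1 =
  \sum_y P s (f s) y * (len_within (rcons h (s, f s)) y n +
                        reach_within (rcons h (s, f s)) y n).
Proof.
move=> sT; rewrite /len_within big_nat_recl // mul0r add0r.
under eq_bigr do rewrite memoryless_hitS // -natr1 mulrDl mul1r big_distrr -big_split.
rewrite /= exchange_big /=; apply: eq_bigr => y _.
rewrite /reach_within mulrDr !big_distrr -big_split /=; apply: eq_bigr => r _.
by ring.
Qed.

Lemma potential_bound n : forall h s,
  len_within h s n + n%:R * (v s - reach_within h s n) <= potential s.
Proof.
elim: n => [|n IH] h s.
  by rewrite /len_within /reach_within !big_geq // add0r mul0r potential_ge0.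
have [sT|sT] := boolP (s \in T).
  have E1 : reach_within h s n.+1 = 1.
    by rewrite /reach_within big_nat_recl //= sT big1 ?addr0 // => r _ /=; rewrite sT.
  have E2 : len_within h s n.+1 = 0.
    by rewrite /len_within big1 // => r _; case: r => [|r]; rewrite ?mul0r //= sT mulr0.
  by rewrite E1 E2 v_T // subrr mulr0 addr0 potential_ge0.
have [vs|vs] := boolP (0 < v s); last first.
  have v0 : v s = 0 by apply/le_anti; rewrite v_ge0 andbT leNgt.
  have Z r h' : hit P T (memoryless f) h' s r = 0 by exact: hit_v0.
  rewrite /len_within /reach_within v0 !big1 => [| r _ | r _]; rewrite ?Z ?mulr0 //.
  by rewrite subrr mulr0 addr0 potential_ge0.
set h' := rcons h (s, f s).
have [_ vE] := (OptE s (f s)).1 (opt_f s).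
rewrite reach_withinS // len_withinS // -/h' {1}vE.
have -> : \sum_y P s (f s) y * (len_within h' y n + reach_within h' y n) +
    n.+1%:R * (\sum_y P s (f s) y * v y - \sum_y P s (f s) y * reach_within h' y n) =
    \sum_y (P s (f s) y * (len_within h' y n + n%:R * (v y - reach_within h' y n)) +
       P s (f s) y * v y).
  rewrite -sumrB big_distrr -big_split /=; apply: eq_bigr => y _.
  by rewrite -natr1; ring.
rewrite big_split /= -vE.
apply: le_trans (drift vs sT); rewrite addrC lerD ?v_le1 //.
by apply: ler_sum => y _; apply: ler_wpM2l; [exact: P_ge0|exact: IH].
Qed.

Lemma memoryless_reach s : 0 < v s -> PrReach P T (memoryless f) s = (v s)%:E.
Proof.
move=> vs; apply/le_anti/andP; split; first by rewrite -ValE; exact: Val_ge.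
apply/lee_addgt0Pr => e e0.
have x0 : 0 <= potential s / e by rewrite divr_ge0 ?potential_ge0 ?ltW.
have := archi_boundP x0; set N := Num.Def.archi_bound _ => HN.
have N0 : 0 < N%:R :> R by apply: le_lt_trans HN.
have Hb := potential_bound N [::] s.
have Hlen := len_within_ge0 [::] s N.
have : N%:R * (v s - reach_within [::] s N) < N%:R * e.
  by apply: le_lt_trans (_ : potential s < _); [lra|rewrite -ltr_pdivrMr].
rewrite ltr_pM2l // => Hgap.
apply: le_trans (_ : (reach_within [::] s N + e)%:E <= _)%E; first by rewrite lee_fin; lra.
by rewrite EFinD leeD2r // nnseries_ge_partial // => r; exact: hit_ge0.
Qed.

Lemma memoryless_len s :
  (\sum_(r <oo) (r%:R * hit P T (memoryless f) [::] s r)%:E <= (potential s)%:E)%E.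
Proof.
apply: nnseries_le => [r|n]; first by rewrite mulr_ge0 ?hit_ge0.
apply: le_trans (potential_bound n [::] s); rewrite lerDl mulr_ge0 //.
by rewrite subr_ge0; exact: partial_reach_le v_excessive _ _ _.
Qed.

End Descent.


Definition reach_from (sigma : strategy R S A) (h : seq (S * A)) (s : S)
  : \bar R := (\sum_(r <oo) (hit P T sigma h s r)%:E)%E.

Section ReachFrom.
Variable sigma : strategy R S A.
Hypothesis Hs : is_strategy legal sigma.

Lemma reach_from_le h s : (reach_from sigma h s <= (v s)%:E)%E.
Proof.
apply: nnseries_le => [r|n]; first exact: hit_ge0.
exact: partial_reach_le v_excessive _ _ _.
Qed.

Lemma reach_fromE h s : reach_from sigma h s = (fine (reach_from sigma h s))%:E.
Proof.
have R0 : (0 <= reach_from sigma h s)%E by apply: nnseries_ge0 => r; exact: hit_ge0.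
by rewrite fineK // ge0_fin_numE // (le_lt_trans (reach_from_le h s) (ltry _)).
Qed.

Lemma reach_fromS h s : s \notin T ->
  reach_from sigma h s = (\sum_b \sum_s' (sigma h s b * P s b s')%:E *
                    reach_from sigma (rcons h (s, b)) s')%E.
Proof.
move=> sT; rewrite /reach_from nnseries_recl; last by move=> r; exact: hit_ge0.
rewrite hit0_notin // add0e.
under eq_eseriesr do rewrite hitS // -sumEFin.
have term_ge0 b s' r :
    (0 <= (sigma h s b * P s b s' * hit P T sigma (rcons h (s, b)) s' r)%:E)%E.
  by rewrite lee_fin mulr_ge0 ?step_ge0 ?hit_ge0.
rewrite nneseries_sum; last by move=> b r _; rewrite -sumEFin sume_ge0.
apply: eq_bigr => b _; under eq_eseriesr do rewrite -sumEFin.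
rewrite nneseries_sum; last by move=> s' r _; exact: term_ge0.
apply: eq_bigr => s' _; rewrite -nneseriesZl; last by move=> r _; rewrite lee_fin hit_ge0.
by apply: eq_eseriesr => r _; rewrite EFinM.
Qed.

Lemma optimal_play h s : s \notin T -> reach_from sigma h s = (v s)%:E ->
  forall b, 0 < sigma h s b -> Opt legal P T s b /\
    forall s', 0 < P s b s' -> reach_from sigma (rcons h (s, b)) s' = (v s')%:E.
Proof.
move=> sT Hopt.
pose x b s' := fine (reach_from sigma (rcons h (s, b)) s').
have xE b s' : reach_from sigma (rcons h (s, b)) s' = (x b s')%:E by exact: reach_fromE.
have xle b s' : x b s' <= v s' by rewrite -lee_fin -xE reach_from_le.
have [H0 H1 Hl] := Hs h s.
pose D b := sigma h s b * (v s - \sum_s' P s b s' * v s').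
pose E b s' := sigma h s b * P s b s' * (v s' - x b s').
have D0 b : 0 <= D b.
  rewrite /D; have := H0 b; rewrite le_eqVlt => /orP[/eqP <-|sb]; first by rewrite mul0r.
  by apply: mulr_ge0; [exact: ltW|rewrite subr_ge0 bellman // Hl].
have E0 b s' : 0 <= E b s' by rewrite mulr_ge0 ?step_ge0 // subr_ge0.
(* The value lost by sigma splits into nonnegative losses D and E. *)
have Hloss : \sum_b (D b + \sum_s' E b s') = 0.
  have Hv : v s = \sum_b \sum_s' sigma h s b * P s b s' * x b s'.
    apply/eqP; rewrite -(@eqe R) -Hopt reach_fromS // -sumEFin; apply/eqP.
    apply: eq_bigr => b _; rewrite -sumEFin; apply: eq_bigr => s' _.
    by rewrite xE -EFinM.
  have -> : \sum_b (D b + \sum_s' E b s') =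
      \sum_b (sigma h s b * v s - \sum_s' sigma h s b * P s b s' * x b s').
    apply: eq_bigr => b _; rewrite /D /E.
    have -> : \sum_s' sigma h s b * P s b s' * (v s' - x b s') =
        sigma h s b * \sum_s' P s b s' * v s' -
        \sum_s' sigma h s b * P s b s' * x b s'.
      by rewrite big_distrr -sumrB; apply: eq_bigr => s' _ /=; ring.
    by ring.
  by rewrite sumrB -big_distrl /= H1 mul1r -Hv subrr.
move=> b sb.
have /eqP : D b + \sum_s' E b s' = 0.
  by apply: (psumr_eq0P _ Hloss) => // c _; rewrite addr_ge0 ?sumr_ge0.
rewrite paddr_eq0 ?sumr_ge0 // => /andP[/eqP HD /eqP HE]; split.
  apply/OptE; split; first exact: Hl.
  by move/eqP: HD; rewrite mulf_eq0 gt_eqF //= subr_eq0 => /eqP.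
move=> s' Ps'; rewrite xE.
have /eqP := psumr_eq0P (fun c _ => E0 b c) HE (i := s') isT.
by rewrite /E !mulf_eq0 (gt_eqF sb) (gt_eqF Ps') /= subr_eq0 => /eqP ->.
Qed.

Definition redirect (tau : strategy R S A) : strategy R S A := fun h s =>
  if pselect (forall b, 0 < sigma h s b -> Opt legal P T s b) then sigma h s
  else tau h s.

Lemma redirect_pruned tau : is_pruned_strategy legal P T tau ->
  is_pruned_strategy legal P T (redirect tau).
Proof.
move=> [Ht Hopt]; split=> [h s|h s a]; rewrite /redirect; case: pselect => H /=.
- exact: Hs.
- exact: Ht.
- exact: H.
- exact: Hopt.
Qed.

Lemma redirect_hit tau r : forall h s, reach_from sigma h s = (v s)%:E ->
  hit P T (redirect tau) h s r = hit P T sigma h s r.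
Proof.
elim: r => [//|r IH] h s Hopt; have [sT|sT] := boolP (s \in T); first by rewrite /= sT.
have Hplay := optimal_play sT Hopt.
rewrite !hitS //.
have -> : redirect tau h s = sigma h s.
  by rewrite /redirect; case: pselect => // H; case: H => b /Hplay [].
apply: eq_bigr => b _; apply: eq_bigr => s' _.
have [->|] := eqVneq (sigma h s b * P s b s') 0; first by rewrite !mul0r.
rewrite mulf_eq0 negb_or => /andP[sb Pbs'].
have [H0 _ Hl] := Hs h s.
have sbp : 0 < sigma h s b by rewrite lt_neqAle eq_sym sb H0.
have Pp : 0 < P s b s' by rewrite lt_neqAle eq_sym Pbs' P_ge0 // Hl.
by rewrite IH //; exact: (Hplay b sbp).2.
Qed.

End ReachFrom.


Section Start.
Variable s0 : S.
Hypothesis vs0 : 0 < v s0.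

Definition len_sum (Q : S -> A -> S -> R) (sigma : strategy R S A) : \bar R :=
  (\sum_(r <oo) (r%:R * hit Q T sigma [::] s0 r)%:E)%E.

Lemma len_sum_ge0 sigma : is_strategy legal sigma -> (0 <= len_sum P sigma)%E.
Proof. by move=> Hs; apply: nnseries_ge0 => r; rewrite mulr_ge0 ?hit_ge0. Qed.

Lemma ExpLenPrunedE sigma : ExpLenPruned legal P T sigma s0 =
  (len_sum (Ppruned legal P T) sigma +
   +oo * (1 - PrReach (Ppruned legal P T) T sigma s0))%E.
Proof. by []. Qed.

Lemma hit_pruned_start sigma r : is_strategy legal sigma ->
  hit (Ppruned legal P T) T sigma [::] s0 r = (v s0)^-1 * hit P T sigma [::] s0 r.
Proof. by move=> Hs; rewrite -(hit_pruned Hs r [::] s0) mulKf // gt_eqF. Qed.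

Lemma PrReach_pruned sigma : is_strategy legal sigma ->
  (PrReach (Ppruned legal P T) T sigma s0 = ((v s0)^-1)%:E * PrReach P T sigma s0)%E.
Proof.
move=> Hs; rewrite /PrReach -nneseriesZl; last by move=> r _; rewrite lee_fin hit_ge0.
by apply: eq_eseriesr => r _; rewrite hit_pruned_start // EFinM.
Qed.

Lemma len_sum_pruned sigma : is_strategy legal sigma ->
  len_sum (Ppruned legal P T) sigma = (((v s0)^-1)%:E * len_sum P sigma)%E.
Proof.
move=> Hs; rewrite /len_sum -nneseriesZl; last first.
  by move=> r _; rewrite lee_fin mulr_ge0 ?hit_ge0.
by apply: eq_eseriesr => r _; rewrite hit_pruned_start // -EFinM mulrCA.
Qed.

Lemma ExpLenPruned_reaching sigma : is_strategy legal sigma ->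
  PrReach P T sigma s0 = (v s0)%:E ->
  ExpLenPruned legal P T sigma s0 = (((v s0)^-1)%:E * len_sum P sigma)%E.
Proof.
move=> Hs HP; rewrite ExpLenPrunedE PrReach_pruned // HP -EFinM mulVf ?gt_eqF //.
by rewrite subee // mule0 adde0 len_sum_pruned.
Qed.

Lemma ExpLenPruned_CondExpLen sigma : is_strategy legal sigma ->
  PrReach P T sigma s0 = (v s0)%:E ->
  ExpLenPruned legal P T sigma s0 = CondExpLen P T sigma s0.
Proof.
move=> Hs HP; rewrite ExpLenPruned_reaching // /CondExpLen HP -nneseriesZl; last first.
  by move=> r _; rewrite lee_fin mulr_ge0 ?hit_ge0.
by apply: eq_eseriesr => r _; rewrite inver (gt_eqF vs0) muleC.
Qed.

Lemma finite_len_reaches sigma : is_strategy legal sigma ->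
  (ExpLenPruned legal P T sigma s0 < +oo)%E -> PrReach P T sigma s0 = (v s0)%:E.
Proof.
move=> Hs Hfin.
have Hp : PrReach P T sigma s0 = (fine (reach_from sigma [::] s0))%:E.
  exact: reach_fromE.
set p := fine _ in Hp; rewrite Hp; congr (_%:E).
have ple : p <= v s0 by rewrite -lee_fin -Hp; exact: reach_from_le.
apply/eqP; rewrite eq_le ple /= leNgt; apply/negP => plt.
have q0 : 0 < 1 - (v s0)^-1 * p by rewrite subr_gt0 mulrC ltr_pdivrMr // mul1r.
move: Hfin; rewrite ExpLenPrunedE PrReach_pruned // Hp -EFinM -EFinB gt0_mulye ?lte_fin //.
have X0 : (0 <= ((v s0)^-1)%:E * len_sum P sigma)%E.
  by rewrite mule_ge0 ?len_sum_ge0 // lee_fin invr_ge0 ltW.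
rewrite addey ?ltxx // len_sum_pruned //.
by apply/negP => /eqP HX; move: X0; rewrite HX leNgt ltNyr.
Qed.

Lemma pruned_finite_len : exists2 tau, is_pruned_strategy legal P T tau &
  (ExpLenPruned legal P T tau s0 < +oo)%E.
Proof.
have [f [next Hfd]] := descent_choice.
have [Hst _] := memoryless_pruned Hfd.
exists (memoryless f); first exact: memoryless_pruned.
rewrite (ExpLenPruned_reaching Hst); last exact: memoryless_reach.
apply: le_lt_trans (_ : _ <= ((v s0)^-1)%:E * (potential f next s0)%:E)%E _.
  by apply: lee_wpmul2l; [rewrite lee_fin invr_ge0 ltW|exact: memoryless_len].
by rewrite -EFinM ltry.
Qed.

End Start.

End MDP.

Local Open Scope ereal_scope.

Theorem theorem1 (R : realType) (S A : finType)
    (legal : S -> A -> bool) (P : S -> A -> S -> R) (T : {set S}) (s0 : S)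
    (sigma_star : strategy R S A) :
  is_MDP legal P ->
  sinks legal P T ->
  0 < Val legal P T s0 ->
  is_pruned_strategy legal P T sigma_star ->
  (forall sigma, is_pruned_strategy legal P T sigma ->
     ExpLenPruned legal P T sigma_star s0 <= ExpLenPruned legal P T sigma s0) ->
  PrReach P T sigma_star s0 = Val legal P T s0 /\
  (sigma_star \in OptReachStrats legal P T s0 /\
   forall sigma, sigma \in OptReachStrats legal P T s0 ->
     CondExpLen P T sigma_star s0 <= CondExpLen P T sigma s0).
Proof.
move=> HM HT HV [Hs_star _] Hmin.
have Hex : exists sigma : strategy R S A, is_strategy legal sigma.
  by have [_ [sigma Hs _] _] := ereal_sup_gt HV; exists sigma.
have ValE := ValE T HM Hex.
have vs0 : (0 < v legal P T s0)%R by rewrite -lte_fin -ValE.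
(* (1): sigma_star beats a pruned strategy of finite expected length. *)
have [tau0 Htau0 Htau0_fin] := pruned_finite_len HM Hex HT vs0.
have Hreach : PrReach P T sigma_star s0 = Val legal P T s0.
  rewrite ValE; apply: finite_len_reaches Hs_star _ => //.
  exact: le_lt_trans (Hmin _ Htau0) Htau0_fin.
split=> //; split; first exact: mem_set.
(* (2): an optimal sigma has a pruned copy with the same hitting distribution. *)
move=> sigma /set_mem [Hs HPs].
have HPs' : reach_from P T sigma [::] s0 = (v legal P T s0)%:E by rewrite -ValE.
pose tau := redirect legal P T sigma tau0.
have Htau : is_pruned_strategy legal P T tau := redirect_pruned Hs Htau0.
have Hhit r : hit P T tau [::] s0 r = hit P T sigma [::] s0 r.
  exact: redirect_hit HPs'.
have Ptau : PrReach P T tau s0 = PrReach P T sigma s0.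
  by apply: eq_eseriesr => r _; rewrite Hhit.
have Ctau : CondExpLen P T tau s0 = CondExpLen P T sigma s0.
  by rewrite /CondExpLen Ptau; apply: eq_eseriesr => r _; rewrite Hhit.
rewrite -Ctau -(ExpLenPruned_CondExpLen HM Hex vs0 Hs_star) -?ValE //.
rewrite -(ExpLenPruned_CondExpLen HM Hex vs0 Htau.1) ?Ptau -?ValE //.
exact: Hmin.
Qed.
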